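(* Let $a:\mathbb{R}\to\mathbb{R}$ be Lipschitz continuous and let $k(x,y):=\frac1y\exp\big(i\frac{a(x)-a(x-y)}{y}\big)$ for $x\in\mathbb{R}$, $y\in\mathbb{R}\setminus\{0\}$. Then for all $x_0\in\mathbb{R}$ and $y\in\mathbb{R}\setminus\{0\}$, \[ \int_{\{|x|>2|y|\}}|k(x+x_0,x-y)-k(x+x_0,x)|\,dx\le 8(1+\|a'\|_\infty). \]
   Context: $\|a'\|_\infty$ denotes the essential supremum of the a.e. derivative of the Lipschitz function $a$ (its Lipschitz constant). *)

From HB Require Import structures.
From mathcomp Require Import all_boot all_order all_algebra.
From mathcomp Require Import all_classical all_reals all_analysis.
Set Implicit Arguments. Unset Strict Implicit. Unset Printing Implicit Defensive.
Import Order.TTheory GRing.Theory Num.Theory.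
Local Open Scope ring_scope.

(* Complex numbers represented as pairs (real part, imaginary part). *)
Definition kxy (R : realType) (a : R -> R) (x y : R) : R * R :=
  let t := (a x - a (x - y)) / y in (cos t / y, sin t / y).

Definition cdist (R : realType) (z w : R * R) : R :=
  Num.sqrt ((z.1 - w.1) ^+ 2 + (z.2 - w.2) ^+ 2).

(* Put u := x - y and X := x + x0.  Both kernel values have the form e^(i phi_v) / v,
   so |k(X,u) - k(X,x)|^2 = (1/u - 1/x)^2 + 2 (1 - cos (phi_u - phi_x)) / (u x), which
   is at most (y / (u x))^2 + (phi_u - phi_x)^2 / (u x).  On |x| > 2|y| we have
   u x >= x^2 / 2, and the Lipschitz bound gives |phi_u - phi_x| <= 2 L |y| / |x|;
   hence the integrand is at most 4 (1 + L) |y| / x^2, whose integral over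
   |x| > 2|y| equals 4 (1 + L). *)

From mathcomp Require Import all_boot all_order all_algebra.
From mathcomp Require Import all_classical all_reals all_analysis.
From mathcomp Require Import lra ring measurable_realfun.
Import Order.TTheory GRing.Theory Num.Theory.
Import numFieldNormedType.Exports.
Local Open Scope classical_set_scope.
Local Open Scope ring_scope.

Section trigonometric_bounds.
Variable R : realType.

Lemma sin_le_id (t : R) : 0 <= t -> sin t <= t.
Proof.
rewrite le_eqVlt => /predU1P[<-|t0]; first by rewrite sin0.
have dh (z : R) : is_derive z 1 (fun z : R => z - sin z) (1 - cos z).
  by apply: is_derive_eq; rewrite /GRing.scale /=; lra.
have [c _ h] := @MVT R _ _ 0 t t0 (fun z _ => dh z)
  (derivable_within_continuous (fun z _ => @ex_derive _ _ _ _ _ _ _ (dh z))).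
have : 0 <= (1 - cos c) * (t - 0) by rewrite mulr_ge0 ?subr_ge0 ?cos_le1 ?subr0 ?ltW.
by rewrite -h sin0; lra.
Qed.

Lemma one_sub_half_sqr_le_cos (t : R) : 1 - t ^+ 2 / 2 <= cos t.
Proof.
wlog t0 : t / 0 <= t.
  by move=> H; have [/H//|t0] := leP 0 t; rewrite -cosN -sqrrN; apply: H; lra.
move: t0; rewrite le_eqVlt => /predU1P[<-|t0]; first by rewrite cos0; lra.
have dh (z : R) : is_derive z 1 (fun z : R => cos z + z ^+ 2 / 2) (z - sin z).
  by apply: is_derive_eq; rewrite /GRing.scale /=; lra.
have [c /andP[c0 _] h] := @MVT R _ _ 0 t t0 (fun z _ => dh z)
  (derivable_within_continuous (fun z _ => @ex_derive _ _ _ _ _ _ _ (dh z))).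
have : 0 <= (c - sin c) * (t - 0).
  by rewrite mulr_ge0 ?subr_ge0 ?sin_le_id ?subr0 ?ltW.
by rewrite -h cos0; lra.
Qed.

End trigonometric_bounds.

Lemma cdist_polar_le {R : realType} (s t u v : R) : 0 < u * v ->
  cdist (cos s / u, sin s / u) (cos t / v, sin t / v)
    <= Num.sqrt ((u^-1 - v^-1) ^+ 2 + (s - t) ^+ 2 / (u * v)).
Proof.
move=> uv0; rewrite /cdist /=; apply: ler_wsqrtr.
have -> : (cos s / u - cos t / v) ^+ 2 + (sin s / u - sin t / v) ^+ 2
    = (u^-1 - v^-1) ^+ 2 + 2 * (1 - cos (s - t)) / (u * v).
  rewrite cosB invfM; apply/eqP; rewrite -subr_eq0; apply/eqP.
  transitivity ((cos s ^+ 2 + sin s ^+ 2 - 1) * u^-1 ^+ 2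
              + (cos t ^+ 2 + sin t ^+ 2 - 1) * v^-1 ^+ 2); first by ring.
  by rewrite !cos2Dsin2 subrr !mul0r addr0.
rewrite lerD2l ler_pM2r ?invr_gt0 //.
by have := one_sub_half_sqr_le_cos _ (s - t); lra.
Qed.

Section lipschitz_kernel.
Variables (R : realType) (a : R -> R) (L : R).
Hypothesis hL : 0 <= L.
Hypothesis ha : forall x y : R, `|a x - a y| <= L * `|x - y|.

Lemma lipschitz_phase_dist (X u v : R) : u != 0 -> v != 0 ->
  `|(a X - a (X - u)) / u - (a X - a (X - v)) / v| <= 2 * L * `|u - v| / `|v|.
Proof.
move=> u0 v0.
set A := a X - a (X - u); set B := a X - a (X - v).
have hA : `|A| <= L * `|u| by rewrite /A (le_trans (ha _ _)) // opprB addrC subrK.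
have hAB : `|A - B| <= L * `|u - v|.
  rewrite /A /B (_ : _ - _ = a (X - v) - a (X - u)); last by ring.
  by rewrite (le_trans (ha _ _)) // (_ : X - v - (X - u) = u - v) //; ring.
have -> : A / u - B / v = A / u * ((v - u) / v) + (A - B) / v.
  by field; rewrite u0 v0.
rewrite (le_trans (ler_normD _ _)) // !normrM !normfV (distrC v).
have hAu : `|A| / `|u| <= L by rewrite ler_pdivrMr ?normr_gt0.
have : `|A| / `|u| * (`|u - v| / `|v|) <= L * (`|u - v| / `|v|).
  by rewrite ler_wpM2r ?divr_ge0.
have : `|A - B| / `|v| <= L * `|u - v| / `|v| by rewrite ler_wpM2r ?invr_ge0.
rewrite -!mulrA; lra.
Qed.

Lemma kxy_sub_le (X y x : R) : 2 * `|y| < `|x| ->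
  cdist (kxy a X (x - y)) (kxy a X x) <= 4 * (1 + L) * `|y| / x ^+ 2.
Proof.
move=> yx; have y0 := normr_ge0 y.
have xy : x * y <= `|x| * `|y| by rewrite -normrM ler_norm.
have x2 : `|x| ^+ 2 = x ^+ 2 by rewrite real_normK ?num_real.
have x0 : x != 0 by rewrite -normr_gt0; lra.
have u0 : x - y != 0 by rewrite -normr_gt0; have := lerB_dist x y; lra.
have hux : x ^+ 2 <= 2 * ((x - y) * x).
  have : 0 <= `|x| * (`|x| - 2 * `|y|) by rewrite mulr_ge0 // subr_ge0 ltW.
  nra.
have ux : 0 < (x - y) * x by rewrite lt0r mulf_neq0 //=; nra.
rewrite /kxy /=; apply: le_trans (cdist_polar_le _ _ _ _ ux) _.
set s := _ - _ / x; set p := ((x - y) * x)^-1; set r := (x ^+ 2)^-1.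
have r0 : 0 < r by rewrite invr_gt0 -x2 exprn_gt0 // normr_gt0.
have p0 : 0 < p by rewrite invr_gt0.
have p2r : p <= 2 * r.
  have -> : 2 * r = (x ^+ 2 / 2)^-1 by rewrite invf_div.
  by rewrite lef_pV2 ?posrE ?divr_gt0 -?x2 ?exprn_gt0 ?normr_gt0 //; lra.
have -> : (x - y)^-1 - x^-1 = y * p by rewrite /p; field; rewrite x0 u0.
have hs : s ^+ 2 <= 4 * L ^+ 2 * y ^+ 2 * r.
  have := lipschitz_phase_dist X _ _ u0 x0.
  rewrite -/s (_ : x - y - x = - y) ?normrN; last by ring.
  rewrite -[s ^+ 2]real_normK ?num_real //.
  rewrite (_ : 4 * L ^+ 2 * y ^+ 2 * r = (2 * L * `|y| / `|x|) ^+ 2); last first.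
    by rewrite expr_div_n x2 !exprMn real_normK ?num_real /r; ring.
  by move=> hs; rewrite ler_pXn2r ?nnegrE ?divr_ge0 ?mulr_ge0.
have Y0 : 0 <= y ^+ 2 by rewrite sqr_ge0.
have hsum : (y * p) ^+ 2 + s ^+ 2 / ((x - y) * x)
    <= (4 * (1 + L) * `|y| / x ^+ 2) ^+ 2.
  rewrite -/p -/r exprMn.
  rewrite (_ : _ ^+ 2 = 16 * (1 + L) ^+ 2 * y ^+ 2 * r ^+ 2); last first.
    by rewrite !exprMn real_normK ?num_real; ring.
  have h1 : y ^+ 2 * p ^+ 2 <= y ^+ 2 * (2 * r) ^+ 2.
    by rewrite ler_wpM2l // ler_pXn2r ?nnegrE //; lra.
  have h2 : s ^+ 2 * p <= 4 * L ^+ 2 * y ^+ 2 * r * (2 * r).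
    by apply: ler_pM => //; rewrite ?sqr_ge0 // ltW.
  have hL2 : 4 + 8 * L ^+ 2 <= 16 * (1 + L) ^+ 2 by have := hL; nra.
  have := ler_wpM2r (mulr_ge0 (sqr_ge0 y) (sqr_ge0 r)) hL2; lra.
apply: le_trans (ler_wsqrtr hsum) _.
by rewrite sqrtr_sqr ger0_norm // divr_ge0 ?sqr_ge0 // !mulr_ge0 // addr_ge0.
Qed.
End lipschitz_kernel.

(* Monotonicity without measurability: the integral of a nonnegative function is
   the supremum of the integrals of the simple functions below it. *)
Lemma ge0_le_integral_nonmeasurable d (T : measurableType d) (R : realType)
    (mu : {measure set T -> \bar R}) (D : set T) (f g : T -> \bar R) :
  (forall x, D x -> (0 <= f x)%E) -> (forall x, D x -> (f x <= g x)%E) ->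
  (\int[mu]_(x in D) f x <= \int[mu]_(x in D) g x)%E.
Proof.
move=> f0 fg.
have g0 x : D x -> (0 <= g x)%E by move=> Dx; exact: le_trans (f0 x Dx) (fg x Dx).
rewrite (ge0_integralE mu f0) (ge0_integralE mu g0).
apply: ereal_sup_le => _ [h hf <-]; exists h => //= x.
exact: le_trans (hf x) (lee_restrict fg x).
Qed.

Section inverse_square_integrals.
Context {R : realType}.

Lemma continuous_inv_sqr (K x : R) : x != 0 ->
  {for x, continuous (fun z : R => K / z ^+ 2)}.
Proof.
move=> x0; apply: (@continuousM _ _ (cst K)); first exact: cvg_cst.
apply: (@continuous_comp _ _ _ (fun z : R => z ^+ 2) GRing.inv).
  exact: exprn_continuous.
by apply: inv_continuous; rewrite sqrf_eq0.
Qed.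

Lemma is_derive_inv (K x : R) : x != 0 ->
  is_derive x 1 (fun z : R => - K / z) (K / x ^+ 2).
Proof.
move=> x0; have := is_deriveZ (- K) (is_deriveV x0 (is_derive_id x 1)).
move/is_derive_eq; apply.
by rewrite /GRing.scale /= mulr1 expr2 invfM; ring.
Qed.

Local Open Scope ereal_scope.

Lemma integral_itvcy_inv_sqr (K c : R) : (0 < c)%R -> (0 <= K)%R ->
  \int[lebesgue_measure]_(x in `[c, +oo[) (K / x ^+ 2)%:E = (K / c)%:E.
Proof.
move=> c0 K0.
have nz x : (c <= x -> x != 0)%R by move=> cx; rewrite gt_eqF // (lt_le_trans c0 cx).
rewrite (@ge0_continuous_FTC2y R (fun x => K / x ^+ 2)%R (fun z => - K / z)%R c 0%R).
- by rewrite sub0e -EFinN mulNr opprK.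
- by move=> x _; rewrite divr_ge0 // sqr_ge0.
- apply/continuous_within_itvcyP; split.
    by move=> x; rewrite in_itv /= andbT => cx; apply/continuous_inv_sqr/nz/ltW.
  exact/cvg_at_right_filter/continuous_inv_sqr/nz.
- rewrite -(mulr0 (- K)%R); apply: cvgM; first exact: cvg_cst.
  by apply/gtr0_cvgV0; [near=> z | exact: cvg_id].
- by move=> x cx; exact: @ex_derive _ _ _ _ _ _ _ (is_derive_inv K _ (nz _ (ltW cx))).
- apply: cvg_at_right_filter.
  exact: (@continuousM _ _ (cst (- K)%R) (@GRing.inv R) c
           (cvg_cst _) (inv_continuous (nz c (lexx c)))).
- move=> x; rewrite in_itv /= andbT => cx.
  by rewrite derive1E (@derive_val _ _ _ _ _ _ _ (is_derive_inv K _ (nz _ (ltW cx)))).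
Unshelve. all: by end_near.
Qed.

Lemma integral_norm_gt_inv_sqr (K c : R) : (0 < c)%R -> (0 <= K)%R ->
  \int[lebesgue_measure]_(x in [set x : R | (c < `|x|)%R]) (K / x ^+ 2)%:E
    = (2 * (K / c))%:E.
Proof.
move=> c0 K0.
have g0 x : 0 <= (K / x ^+ 2)%:E by rewrite lee_fin divr_ge0 // sqr_ge0.
have mg (D : set R) : open D -> (forall x, D x -> x != 0)%R ->
    measurable_fun D (fun x : R => (K / x ^+ 2)%:E).
  move=> oD D0; apply/measurable_EFinP; apply: open_continuous_measurable_fun => //.
  by move=> x; rewrite inE => /D0; apply: continuous_inv_sqr.
have [ltNc_neq0 gtc_neq0] :
    (forall x, x < - c -> x != 0)%R /\ (forall x, c < x -> x != 0)%R.
  by split=> x cx; apply/eqP => x0; move: cx; rewrite x0; lra.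
have -> : [set x : R | (c < `|x|)%R] = `]-oo, (- c)%R[ `|` `]c, +oo[.
  apply/seteqP; split => x /=; rewrite !in_itv /= ltr_normr.
    by move=> /orP[h|h]; [right|left]; lra.
  by case=> h; apply/orP; [right|left]; lra.
rewrite ge0_integral_setU //=; first last.
- rewrite disj_set2E; apply/eqP; rewrite -subset0 => x [] /=; rewrite !in_itv /=; lra.
- apply: mg; first by apply: openU; exact: interval_open.
  by move=> x [] /=; rewrite in_itv /= ?andbT; [apply: ltNc_neq0 | apply: gtc_neq0].
rewrite integral_itv_bndo_bndc; last first.
  apply: mg; first exact: interval_open.
  by move=> x /=; rewrite in_itv /=; apply: ltNc_neq0.
rewrite integral_itv_obnd_cbnd; last first.
  apply: mg; first exact: interval_open.
  by move=> x /=; rewrite in_itv /= andbT; apply: gtc_neq0.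
rewrite ge0_integration_by_substitutionNy; first last.
- by move=> x _; rewrite divr_ge0 // sqr_ge0.
- apply: continuous_in_subspaceT => x; rewrite inE /= in_itv /= => xc.
  by apply: continuous_inv_sqr; rewrite lt_eqF //; lra.
under eq_integral do rewrite /= sqrrN.
by rewrite integral_itvcy_inv_sqr // -EFinD; congr EFin; ring.
Qed.

End inverse_square_integrals.

Theorem lemma2p1 (R : realType) (a : R -> R) (L : R)
  (hL : 0 <= L) (ha : forall x y : R, `|a x - a y| <= L * `|x - y|)
  (x0 y : R) (hy : y != 0) :
  (\int[lebesgue_measure]_(x in [set x : R | (2 * `|y| < `|x|)%R])
      (cdist (kxy a (x + x0) (x - y)) (kxy a (x + x0) x))%:E
   <= (8 * (1 + L))%:E)%E.
Proof.
have y0 : 0 < `|y| by rewrite normr_gt0.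
set K := 4 * (1 + L) * `|y|.
have K0 : 0 <= K by rewrite !mulr_ge0 // addr_ge0.
apply: (@le_trans _ _ (\int[lebesgue_measure]_(x in [set x : R | (2 * `|y| < `|x|)%R])
                          (K / x ^+ 2)%:E)%E).
  apply: ge0_le_integral_nonmeasurable => x hx; rewrite lee_fin ?sqrtr_ge0 //.
  exact: kxy_sub_le.
rewrite integral_norm_gt_inv_sqr ?mulr_gt0 // lee_fin.
have -> : 2 * (K / (2 * `|y|)) = 4 * (1 + L) by rewrite /K; field; rewrite gt_eqF.
lra.
Qed.
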